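(* Let $\xi>0$ and consider the reduced problem $\dot y=e^z-1$, $\dot z=\xi+e^z(\xi z-\xi y-\xi)$ (i.e. with $\alpha=\xi$), compactified at infinity. There is a unique heteroclinic connection between the points at infinity $Q^3$ and $Q^6$ on the critical manifold; it runs through the manifolds $W^{c,s}$ and $W^{c,u}$ and coincides with the level set $\{H=1\}$ of $H(y,z)=-e^{-\xi y}(\xi y-\xi z+\xi+1-\xi e^{-z})+1$. This set can be written as the union of two graphs $z=z^\pm(y)$, $y\ge -1/\xi$, such that $z^-(y)$ approaches $Q^3$ with $z^-=O(y)$ and $z^+(y)$ approaches $Q^6$ with $z^+=O(\ln y)$ as $y\to\infty$.
   Context: Points at infinity: with $y_3=y/z$, $w_3=1/z$ ($z>0$), $Q^3=(w_3,y_3)=(0,1)$ (for $\alpha=\xi$); with $\rho=-1/z$, $\eta=e^{-z}/y$ ($z<0$, $y>0$), $Q^6=(\rho,\eta)=(0,1)$. $W^{c,s}$ is the unique center-stable manifold of $Q^3$ and $W^{c,u}$ the unique center-unstable manifold of $Q^6$ for the compactified, time-desingularized reduced problem. *)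

From Stdlib Require Import Reals.
From Coquelicot Require Import Coquelicot.
Open Scope R_scope.

Definition field_y (y z : R) : R := exp z - 1.
Definition field_z (xi y z : R) : R := xi + exp z * (xi * z - xi * y - xi).

Definition H (xi y z : R) : R :=
  - exp (- xi * y) * (xi * y - xi * z + xi + 1 - xi * exp (- z)) + 1.

Definition Rbar_at_left' (b : Rbar) : (R -> Prop) -> Prop :=
  match b with
  | Finite x => at_left x
  | p_infty => Rbar_locally p_infty
  | m_infty => Rbar_locally m_infty
  end.
Definition Rbar_at_right' (a : Rbar) : (R -> Prop) -> Prop :=
  match a with
  | Finite x => at_right x
  | p_infty => Rbar_locally p_infty
  | m_infty => Rbar_locally m_infty
  end.

Definition is_sol (xi : R) (a b : Rbar) (y z : R -> R) : Prop :=
  Rbar_lt a b /\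
  forall t : R, Rbar_lt a t -> Rbar_lt t b ->
    is_derive y t (field_y (y t) (z t)) /\
    is_derive z t (field_z xi (y t) (z t)).

(* Convergence to Q^3 along filter F: in the chart y3 = y/z, w3 = 1/z (z > 0),
   (w3, y3) -> (0, 1). *)
Definition tends_Q3 (F : (R -> Prop) -> Prop) (y z : R -> R) : Prop :=
  F (fun t => 0 < z t) /\
  filterlim (fun t => / z t) F (locally 0) /\
  filterlim (fun t => y t / z t) F (locally 1).

(* Convergence to Q^6 along filter F: in the chart rho = -1/z, eta = e^{-z}/y
   (z < 0, y > 0), (rho, eta) -> (0, 1). *)
Definition tends_Q6 (F : (R -> Prop) -> Prop) (y z : R -> R) : Prop :=
  F (fun t => z t < 0 /\ 0 < y t) /\
  filterlim (fun t => - / z t) F (locally 0) /\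
  filterlim (fun t => exp (- z t) / y t) F (locally 1).

Definition heteroclinic_Q3_Q6 (xi : R) (a b : Rbar) (y z : R -> R) : Prop :=
  is_sol xi a b y z /\
  ((tends_Q6 (Rbar_at_right' a) y z /\ tends_Q3 (Rbar_at_left' b) y z) \/
   (tends_Q3 (Rbar_at_right' a) y z /\ tends_Q6 (Rbar_at_left' b) y z)).

Definition orbit (a b : Rbar) (y z : R -> R) (Y Z : R) : Prop :=
  exists t : R, Rbar_lt a t /\ Rbar_lt t b /\ y t = Y /\ z t = Z.

From Stdlib Require Import Reals Lra Psatz ClassicalEpsilon.
From Coquelicot Require Import Coquelicot.
Open Scope R_scope.

(* H is a first integral of the reduced flow, and
   1 - H(y,z) = xi e^{-xi y} (y - level_y z)  with  level_y z = z + e^{-z} - 1 - 1/xi.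
   Near Q^3 we have y ~ z -> +oo, so the exponential factor wins and H -> 1 there;
   hence every heteroclinic orbit lies in {H = 1} = {y = level_y z}.  Along the orbit
   z runs from -oo (at Q^6) to +oo (at Q^3), so by the intermediate value theorem the
   orbit is the whole curve.  level_y is strictly monotone on z >= 0 and on z <= 0,
   with minimum -1/xi at z = 0; its two inverses are the graphs z^- and z^+, and
   their growth comes from y ~ z as z -> +oo and y ~ e^{-z} as z -> -oo. *)

Lemma filterlim_locally_Rabs {T} (F : (T -> Prop) -> Prop) {FF : Filter F}
  (f : T -> R) (l : R) :
  filterlim f F (locally l) <->
  forall eps, 0 < eps -> F (fun t => Rabs (f t - l) < eps).
Proof.
  rewrite filterlim_locally. split.
  - intros Hf eps Heps. exact (Hf (mkposreal eps Heps)).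
  - intros Hf eps. exact (Hf eps (cond_pos eps)).
Qed.

Lemma exp_ge_quadratic u : 0 <= u -> 1 + u + u * u / 4 <= exp u.
Proof.
  intros Hu. replace (exp u) with (exp (u / 2) * exp (u / 2))
    by (rewrite <- exp_plus; f_equal; field).
  pose proof (exp_ineq1_le (u / 2)). nra.
Qed.

Lemma exp_ge_double u : 0 <= u -> 2 * u <= exp u.
Proof.
  intros Hu. pose proof (exp_ge_quadratic u Hu).
  pose proof (Rle_0_sqr (u - 2)). unfold Rsqr in *. lra.
Qed.

Lemma exp_dominates_affine (K eps : R) : 0 < eps ->
  exists M, forall u, M <= u -> u + K < eps * exp u.
Proof.
  intros Heps. exists (4 * (1 + Rabs K) / eps + 1). intros u Hu.
  assert (HM : 4 * (1 + Rabs K) <= eps * (u - 1)).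
  { apply (Rmult_le_reg_r (/ eps)); [now apply Rinv_0_lt_compat|].
    replace (eps * (u - 1) * / eps) with (u - 1) by (field; lra). lra. }
  pose proof (exp_ge_quadratic u ltac:(pose proof (Rabs_pos K); nra)).
  pose proof (Rle_abs K). pose proof (Rabs_pos K). nra.
Qed.

Section EventuallyLarge.

Context {T : Type} (F : (T -> Prop) -> Prop) {FF : Filter F}.

Lemma eventually_large_of_inv_tends_0 (f : T -> R) :
  F (fun t => 0 < f t) -> filterlim (fun t => / f t) F (locally 0) ->
  forall M, F (fun t => M < f t).
Proof.
  intros Hpos Hinv M. set (K := Rmax M 0 + 1).
  assert (HK : 0 < K) by (unfold K; pose proof (Rmax_r M 0); lra).
  apply filter_imp with (2 := filter_and _ _ Hpos
    (proj1 (filterlim_locally_Rabs F _ _) Hinv (/ K) (Rinv_0_lt_compat K HK))).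
  intros t [Ht Hlt]. rewrite Rminus_0_r, Rabs_pos_eq in Hlt
    by (left; now apply Rinv_0_lt_compat).
  apply Rinv_lt_cancel in Hlt; [|exact Ht].
  pose proof (Rmax_l M 0). unfold K in Hlt. lra.
Qed.

Lemma inv_tends_0_of_eventually_large (f : T -> R) :
  (forall M, F (fun t => M < f t)) -> filterlim (fun t => / f t) F (locally 0).
Proof.
  intros Hf. apply filterlim_locally_Rabs; [exact FF|]. intros eps Heps.
  apply filter_imp with (2 := Hf (/ eps)). intros t Ht.
  pose proof (Rinv_0_lt_compat eps Heps).
  rewrite Rminus_0_r, Rabs_pos_eq by (left; apply Rinv_0_lt_compat; lra).
  rewrite <- (Rinv_inv eps). apply Rinv_lt_contravar; nra.
Qed.

Lemma ratio_tends_1_of_bounded_diff (y z : T -> R) (K : R) :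
  (forall M, F (fun t => M < z t)) -> F (fun t => Rabs (y t - z t) <= K) ->
  filterlim (fun t => y t / z t) F (locally 1).
Proof.
  intros Hz Hdiff. apply filterlim_locally_Rabs; [exact FF|]. intros eps Heps.
  apply filter_imp with (2 := filter_and _ _ Hdiff (Hz (Rabs K / eps))).
  intros t [Hd Ht].
  assert (Hz0 : 0 < z t) by (pose proof (Rabs_pos K);
    assert (0 <= Rabs K / eps) by (apply Rdiv_le_0_compat; lra); lra).
  replace (y t / z t - 1) with ((y t - z t) / z t) by (field; lra).
  rewrite Rabs_div, (Rabs_pos_eq (z t)), Rlt_div_l by lra.
  apply Rlt_div_l in Ht; [|exact Heps].
  pose proof (Rle_abs K). lra.
Qed.

End EventuallyLarge.

Global Instance Rbar_at_right'_proper (a : Rbar) : ProperFilter (Rbar_at_right' a).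
Proof. destruct a; simpl; typeclasses eauto. Qed.

Global Instance Rbar_at_left'_proper (b : Rbar) : ProperFilter (Rbar_at_left' b).
Proof. destruct b; simpl; typeclasses eauto. Qed.

Lemma Rbar_at_right'_interval (a b : Rbar) : Rbar_lt a b ->
  Rbar_at_right' a (fun t => Rbar_lt a t /\ Rbar_lt t b).
Proof.
  destruct a as [a| |], b as [b| |]; simpl; try tauto; intros Hab.
  - exists (mkposreal (b - a) ltac:(lra)). intros t Ht Hat.
    apply Rabs_lt_between' in Ht; simpl in Ht. lra.
  - exists (mkposreal 1 Rlt_0_1). tauto.
  - exists b. tauto.
  - exists 0. tauto.
Qed.

Lemma Rbar_at_left'_interval (a b : Rbar) : Rbar_lt a b ->
  Rbar_at_left' b (fun t => Rbar_lt a t /\ Rbar_lt t b).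
Proof.
  destruct a as [a| |], b as [b| |]; simpl; try tauto; intros Hab.
  - exists (mkposreal (b - a) ltac:(lra)). intros t Ht Htb.
    apply Rabs_lt_between' in Ht; simpl in Ht. lra.
  - exists a. tauto.
  - exists (mkposreal 1 Rlt_0_1). tauto.
  - exists 0. tauto.
Qed.

Lemma Rbar_lt_between (a b : Rbar) (t1 t2 x : R) :
  Rbar_lt a t1 -> Rbar_lt t1 b -> Rbar_lt a t2 -> Rbar_lt t2 b ->
  Rmin t1 t2 <= x <= Rmax t1 t2 -> Rbar_lt a x /\ Rbar_lt x b.
Proof.
  intros Ha1 H1b Ha2 H2b [Hmin Hmax]. split.
  - apply Rbar_lt_le_trans with (Rmin t1 t2); [now apply Rmin_case | exact Hmin].
  - apply Rbar_le_lt_trans with (Rmax t1 t2); [exact Hmax | now apply Rmax_case].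
Qed.

Lemma Rbar_at_right'_ex_interval (a b : Rbar) (P : R -> Prop) :
  Rbar_lt a b -> Rbar_at_right' a P ->
  exists t : R, Rbar_lt a t /\ Rbar_lt t b /\ P t.
Proof.
  intros Hab HP. destruct (Hierarchy.filter_ex _
    (filter_and _ _ (Rbar_at_right'_interval a b Hab) HP)) as [t [[Ha Hb] Ht]].
  now exists t.
Qed.

Lemma Rbar_at_left'_ex_interval (a b : Rbar) (P : R -> Prop) :
  Rbar_lt a b -> Rbar_at_left' b P ->
  exists t : R, Rbar_lt a t /\ Rbar_lt t b /\ P t.
Proof.
  intros Hab HP. destruct (Hierarchy.filter_ex _
    (filter_and _ _ (Rbar_at_left'_interval a b Hab) HP)) as [t [[Ha Hb] Ht]].
  now exists t.
Qed.

(* Junk (unspecified) value when [Y] is not attained by [f] on [[0, +oo)]. *)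
Definition inv_nonneg (f : R -> R) (Y : R) : R :=
  epsilon (inhabits 0) (fun u => 0 <= u /\ f u = Y).

Section IncreasingInverse.

Variables (f : R -> R) (c : R).
Hypothesis f_cont : continuity f.
Hypothesis f_incr : forall u v, 0 <= u -> u < v -> f u < f v.
Hypothesis f_ge : forall u, 0 <= u -> u - c <= f u.

Lemma inv_nonneg_spec (Y : R) : f 0 <= Y ->
  0 <= inv_nonneg f Y /\ f (inv_nonneg f Y) = Y.
Proof.
  intros HY. unfold inv_nonneg. apply (epsilon_spec _ (fun u => 0 <= u /\ f u = Y)).
  assert (Hc : 0 <= Y + c) by (pose proof (f_ge 0 (Rle_refl 0)); lra).
  destruct (IVT_cor (fun u => f u - Y) 0 (Y + c)) as [u [Hu Hfu]].
  - intros x. apply continuity_pt_minus; [apply f_cont|].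
    apply continuity_pt_const. now intros ? ?.
  - exact Hc.
  - pose proof (f_ge (Y + c) Hc). apply Rmult_le_0_r; lra.
  - exists u. split; lra.
Qed.

Lemma lt_of_incr_lt (u v : R) : 0 <= u -> 0 <= v -> f u < f v -> u < v.
Proof.
  intros Hu Hv Hf. destruct (Rtotal_order u v) as [|[->|Hvu]]; [assumption|lra|].
  pose proof (f_incr v u Hv Hvu). lra.
Qed.

Lemma inv_nonneg_image (u : R) : 0 <= u -> inv_nonneg f (f u) = u.
Proof.
  intros Hu. destruct (epsilon_spec (inhabits 0) (fun v => 0 <= v /\ f v = f u))
    as [Hv Hfv]; [now exists u|].
  fold (inv_nonneg f (f u)) in Hv, Hfv.
  destruct (Rtotal_order (inv_nonneg f (f u)) u) as [Hlt|[Heq|Hgt]]; [|exact Heq|].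
  - pose proof (f_incr _ _ Hv Hlt). lra.
  - pose proof (f_incr _ _ Hu Hgt). lra.
Qed.

Lemma inv_nonneg_continuous (Y0 : R) : f 0 <= Y0 ->
  filterlim (inv_nonneg f) (within (fun Y => f 0 <= Y) (locally Y0))
    (locally (inv_nonneg f Y0)).
Proof.
  intros HY0. destruct (inv_nonneg_spec Y0 HY0) as [Hz0 Hfz0].
  set (z0 := inv_nonneg f Y0) in *.
  apply filterlim_locally_Rabs; [typeclasses eauto|]. intros eps Heps.
  pose proof (f_incr z0 (z0 + eps) Hz0 ltac:(lra)) as Hup.
  assert (exists delta_lo, 0 < delta_lo /\
     forall Y, Y0 - delta_lo < Y -> 0 <= inv_nonneg f Y -> f (inv_nonneg f Y) = Y ->
       z0 - eps < inv_nonneg f Y) as [delta_lo [Hdlo Hlo]].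
  { destruct (Rle_dec 0 (z0 - eps)) as [Hle|Hlt].
    - pose proof (f_incr (z0 - eps) z0 Hle ltac:(lra)).
      exists (Y0 - f (z0 - eps)). split; [lra|].
      intros Y HY Hv Hfv. apply lt_of_incr_lt; lra.
    - exists 1. split; [lra|]. intros; lra. }
  exists (mkposreal (Rmin (f (z0 + eps) - Y0) delta_lo) ltac:(apply Rmin_pos; lra)).
  intros Y HY HD. apply Rabs_lt_between' in HY; simpl in HY.
  pose proof (Rmin_l (f (z0 + eps) - Y0) delta_lo).
  pose proof (Rmin_r (f (z0 + eps) - Y0) delta_lo).
  destruct (inv_nonneg_spec Y HD) as [Hv Hfv].
  apply Rabs_lt_between'. split.
  - apply Hlo; auto; lra.
  - apply lt_of_incr_lt; lra.
Qed.

End IncreasingInverse.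

Definition level_y (xi z : R) : R := z + exp (- z) - (1 + / xi).

Section LevelCurve.

Variable xi : R.
Hypothesis xi_pos : 0 < xi.

Lemma one_sub_H (Y Z : R) :
  1 - H xi Y Z = xi * exp (- xi * Y) * (Y - level_y xi Z).
Proof. unfold H, level_y. field. lra. Qed.

Lemma H_eq_1_iff (Y Z : R) : H xi Y Z = 1 <-> Y = level_y xi Z.
Proof.
  pose proof (one_sub_H Y Z) as HQ. pose proof (exp_pos (- xi * Y)). split.
  - intros HH. rewrite HH, Rminus_diag in HQ. symmetry in HQ.
    apply Rmult_integral in HQ as [HQ|HQ]; [|lra].
    apply Rmult_integral in HQ as [HQ|HQ]; lra.
  - intros ->. rewrite Rminus_diag, Rmult_0_r in HQ. lra.
Qed.

Lemma H_sub_1_bound (Y Z : R) : 0 < Z -> Rabs (Y - Z) < Z / 2 ->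
  Rabs (H xi Y Z - 1) <= exp (- (xi * Z / 2)) * (xi * Z / 2 + (2 * xi + 1)).
Proof.
  intros HZ HY. pose proof (Rinv_0_lt_compat xi xi_pos) as Hinv.
  apply Rabs_lt_between' in HY.
  assert (Hexp : exp (- xi * Y) <= exp (- (xi * Z / 2))).
  { destruct (Req_dec (- xi * Y) (- (xi * Z / 2))) as [->|Hne]; [lra|].
    left. apply exp_increasing. nra. }
  assert (Hdiff : Rabs (Y - level_y xi Z) <= Z / 2 + (1 + (1 + / xi))).
  { unfold level_y. pose proof (exp_pos (- Z)).
    assert (exp (- Z) <= 1) by (rewrite <- exp_0; left; apply exp_increasing; lra).
    apply Rabs_le. lra. }
  replace (H xi Y Z - 1) with (- (1 - H xi Y Z)) by ring.
  rewrite Rabs_Ropp, one_sub_H, !Rabs_mult, (Rabs_pos_eq xi), (Rabs_pos_eq (exp _))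
    by (lra || apply Rlt_le, exp_pos).
  replace (exp (- (xi * Z / 2)) * (xi * Z / 2 + (2 * xi + 1)))
    with (xi * exp (- (xi * Z / 2)) * (Z / 2 + (1 + (1 + / xi)))) by (field; lra).
  pose proof (exp_pos (- xi * Y)). pose proof (Rabs_pos (Y - level_y xi Z)).
  apply Rmult_le_compat; [nra | lra | | exact Hdiff].
  apply Rmult_le_compat_l; lra.
Qed.

Lemma level_y_0 : level_y xi 0 = - / xi.
Proof. unfold level_y. rewrite Ropp_0, exp_0. ring. Qed.

Lemma level_y_ge (z : R) : - / xi <= level_y xi z.
Proof. unfold level_y. pose proof (exp_ineq1_le (- z)). lra. Qed.

Lemma level_y_continuous : continuity (level_y xi).
Proof.
  intros z. apply continuity_pt_filterlim, (ex_derive_continuous (level_y xi)).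
  unfold level_y. auto_derive. exact I.
Qed.

Lemma level_y_opp_continuous : continuity (fun u => level_y xi (- u)).
Proof.
  apply (continuity_comp Ropp), level_y_continuous.
  apply continuity_opp, derivable_continuous, derivable_id.
Qed.

Lemma level_y_increasing (u v : R) : 0 <= u -> u < v -> level_y xi u < level_y xi v.
Proof.
  intros Hu Huv. unfold level_y.
  replace (- v) with (- u + - (v - u)) by ring. rewrite exp_plus.
  pose proof (exp_ineq1 (- (v - u)) ltac:(lra)).
  assert (exp (- u) <= 1) by (rewrite <- exp_0; destruct Hu as [Hu|<-];
    [left; apply exp_increasing; lra | rewrite Ropp_0; lra]).
  pose proof (exp_pos (- u)). nra.
Qed.

Lemma level_y_opp_increasing (u v : R) : 0 <= u -> u < v ->
  level_y xi (- u) < level_y xi (- v).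
Proof.
  intros Hu Huv. unfold level_y. rewrite !Ropp_involutive.
  replace v with (u + (v - u)) at 2 by ring. rewrite exp_plus.
  pose proof (exp_ineq1 (v - u) ltac:(lra)).
  pose proof (exp_ineq1_le u). nra.
Qed.

Lemma level_y_ge_sub (u : R) : u - (1 + / xi) <= level_y xi u.
Proof. unfold level_y. pose proof (exp_pos (- u)). lra. Qed.

Lemma level_y_opp_ge_sub (u : R) : 0 <= u -> u - (1 + / xi) <= level_y xi (- u).
Proof.
  intros Hu. unfold level_y. rewrite Ropp_involutive.
  pose proof (exp_ge_double u Hu). lra.
Qed.

End LevelCurve.

Section Ends.

Context (F : (R -> Prop) -> Prop) {FF : Filter F}.
Variable xi : R.
Hypothesis xi_pos : 0 < xi.

Lemma tends_Q3_z_large (y z : R -> R) :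
  tends_Q3 F y z -> forall M, F (fun t => M < z t).
Proof. intros [Hpos [Hinv _]]. exact (eventually_large_of_inv_tends_0 F z Hpos Hinv). Qed.

Lemma tends_Q3_of_level (y z : R -> R) :
  (forall M, F (fun t => M < z t)) -> F (fun t => y t = level_y xi (z t)) ->
  tends_Q3 F y z.
Proof.
  intros Hz Hy. split; [|split].
  - apply Hz.
  - now apply inv_tends_0_of_eventually_large.
  - apply (ratio_tends_1_of_bounded_diff _ _ _ (1 + (1 + / xi)) Hz).
    apply filter_imp with (2 := filter_and _ _ Hy (Hz 0)). intros t [-> Ht].
    unfold level_y. pose proof (exp_pos (- z t)).
    assert (exp (- z t) <= 1) by (rewrite <- exp_0; left; apply exp_increasing; lra).
    pose proof (Rinv_0_lt_compat xi xi_pos).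
    apply Rabs_le. lra.
Qed.

Lemma level_y_opp_exp_ratio (eps : R) : 0 < eps ->
  exists M, forall u, M <= u ->
    0 < level_y xi (- u) /\ Rabs (exp u / level_y xi (- u) - 1) < eps.
Proof.
  intros Heps. pose proof (Rinv_0_lt_compat xi xi_pos).
  destruct (exp_dominates_affine (1 + / xi) (eps / (1 + eps)))
    as [M HM]; [apply Rdiv_lt_0_compat; lra|].
  exists (Rmax M 0). intros u Hu.
  pose proof (HM u (Rle_trans _ _ _ (Rmax_l M 0) Hu)) as Hdom.
  pose proof (Rmax_r M 0).
  assert (Hk : eps / (1 + eps) * exp u * (1 + eps) = eps * exp u) by (field; lra).
  assert (Hlt : (u + (1 + / xi)) < eps * level_y xi (- u)).
  { assert ((u + (1 + / xi)) * (1 + eps) < eps / (1 + eps) * exp u * (1 + eps))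
      by (apply Rmult_lt_compat_r; lra).
    unfold level_y. rewrite Ropp_involutive. lra. }
  assert (Hpos : 0 < level_y xi (- u)).
  { apply (Rmult_lt_reg_l eps); lra. }
  split; [exact Hpos|].
  assert (Hexp : exp u = level_y xi (- u) + (u + (1 + / xi)))
    by (unfold level_y; rewrite Ropp_involutive; ring).
  replace (exp u / level_y xi (- u) - 1) with ((u + (1 + / xi)) / level_y xi (- u))
    by (rewrite Hexp; field; lra).
  rewrite Rabs_pos_eq by (apply Rdiv_le_0_compat; lra).
  apply Rlt_div_l; lra.
Qed.

Lemma tends_Q6_of_level (y z : R -> R) :
  (forall M, F (fun t => z t < M)) -> F (fun t => y t = level_y xi (z t)) ->
  tends_Q6 F y z.
Proof.
  intros Hz Hy.
  assert (Hnz : forall M, F (fun t => M < - z t)).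
  { intros M. apply filter_imp with (2 := Hz (- M)). intros t Ht. lra. }
  assert (Hratio : forall eps, 0 < eps -> F (fun t =>
      0 < y t /\ Rabs (exp (- z t) / y t - 1) < eps)).
  { intros eps Heps. destruct (level_y_opp_exp_ratio eps Heps) as [M HM].
    apply filter_imp with (2 := filter_and _ _ Hy (Hnz M)). intros t [-> Ht].
    pose proof (HM (- z t) ltac:(lra)) as HMt. now rewrite Ropp_involutive in HMt. }
  split; [|split].
  - apply filter_imp with (2 := filter_and _ _ (Hz 0) (Hratio 1 Rlt_0_1)).
    intros t [Ht [Hyt _]]. now split.
  - apply (filterlim_ext (fun t => / - z t)); [intros t; apply Rinv_opp|].
    now apply inv_tends_0_of_eventually_large.
  - apply filterlim_locally_Rabs; [exact FF|]. intros eps Heps.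
    apply filter_imp with (2 := Hratio eps Heps). tauto.
Qed.

Lemma H_tends_1_at_Q3 (y z : R -> R) :
  tends_Q3 F y z -> filterlim (fun t => H xi (y t) (z t)) F (locally 1).
Proof.
  intros HQ3. pose proof (tends_Q3_z_large y z HQ3) as Hz. destruct HQ3 as [_ [_ Hratio]].
  apply filterlim_locally_Rabs; [exact FF|]. intros eps Heps.
  destruct (exp_dominates_affine (2 * xi + 1) eps Heps) as [M HM].
  apply filter_imp with (2 := filter_and _ _ (Hz (Rmax (2 * M / xi) 0))
    (proj1 (filterlim_locally_Rabs F _ _) Hratio (1 / 2) ltac:(lra))).
  intros t [Ht Hyz]. pose proof (Rmax_l (2 * M / xi) 0) as HM1.
  pose proof (Rmax_r (2 * M / xi) 0) as HM2.
  set (w := xi * z t / 2).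
  assert (Hw : M <= w).
  { unfold w. apply (Rmult_le_reg_r (2 / xi)); [apply Rdiv_lt_0_compat; lra|].
    replace (xi * z t / 2 * (2 / xi)) with (z t) by (field; lra).
    replace (M * (2 / xi)) with (2 * M / xi) by (field; lra). lra. }
  assert (Hyz' : Rabs (y t - z t) < z t / 2).
  { replace (y t - z t) with ((y t / z t - 1) * z t) by (field; lra).
    rewrite Rabs_mult, (Rabs_pos_eq (z t)) by lra. nra. }
  eapply Rle_lt_trans; [apply (H_sub_1_bound xi xi_pos); lra|]. fold w.
  assert (Hww : exp (- w) * exp w = 1) by (rewrite <- exp_plus, Rplus_opp_l; apply exp_0).
  pose proof (HM w Hw). pose proof (exp_pos (- w)).
  apply Rlt_le_trans with (exp (- w) * (eps * exp w)); [apply Rmult_lt_compat_l; lra|].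
  nra.
Qed.

Lemma tends_Q6_z_small (y z : R -> R) :
  tends_Q6 F y z -> forall M, F (fun t => z t < M).
Proof.
  intros [Hneg [Hinv _]] M.
  assert (Hlarge : forall M, F (fun t => M < - z t)).
  { apply (eventually_large_of_inv_tends_0 F).
    - apply filter_imp with (2 := Hneg). intros t Ht. lra.
    - apply (filterlim_ext (fun t => - / z t)); [intros t; now rewrite Rinv_opp | exact Hinv]. }
  apply filter_imp with (2 := Hlarge (- M)). intros t Ht. lra.
Qed.

End Ends.

Section Dynamics.

Variable xi : R.
Hypothesis xi_pos : 0 < xi.

Lemma H_derive_along_sol (y z : R -> R) (t : R) :
  is_derive y t (field_y (y t) (z t)) -> is_derive z t (field_z xi (y t) (z t)) ->
  is_derive (fun s => H xi (y s) (z s)) t 0.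
Proof.
  intros Hy Hz. unfold H.
  assert (Ey : ex_derive y t) by (eexists; eauto).
  assert (Ez : ex_derive z t) by (eexists; eauto).
  auto_derive; [tauto|].
  change (fun x => y x) with y; change (fun x => z x) with z.
  rewrite (is_derive_unique _ _ _ Hy), (is_derive_unique _ _ _ Hz).
  unfold field_y, field_z. rewrite exp_Ropp. field. apply Rgt_not_eq, exp_pos.
Qed.

Lemma H_constant_on_sol (a b : Rbar) (y z : R -> R) : is_sol xi a b y z ->
  forall t1 t2 : R, Rbar_lt a t1 -> Rbar_lt t1 b -> Rbar_lt a t2 -> Rbar_lt t2 b ->
  H xi (y t1) (z t1) = H xi (y t2) (z t2).
Proof.
  intros [_ Hsol] t1 t2 Ha1 H1b Ha2 H2b.
  assert (Hder : forall s, Rmin t1 t2 <= s <= Rmax t1 t2 ->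
            is_derive (fun s => H xi (y s) (z s)) s 0).
  { intros s Hs. destruct (Rbar_lt_between a b t1 t2 s Ha1 H1b Ha2 H2b Hs) as [Has Hsb].
    apply H_derive_along_sol; apply (Hsol s Has Hsb). }
  destruct (MVT_gen (fun s => H xi (y s) (z s)) t1 t2 (fun _ => 0)) as [c [_ Hc]].
  - intros s Hs. apply Hder. lra.
  - intros s Hs. apply continuity_pt_filterlim.
    apply (ex_derive_continuous (fun s => H xi (y s) (z s))).
    eexists. now apply Hder.
  - lra.
Qed.

Lemma H_eq_1_on_heteroclinic (a b : Rbar) (y z : R -> R) :
  heteroclinic_Q3_Q6 xi a b y z ->
  forall t : R, Rbar_lt a t -> Rbar_lt t b -> H xi (y t) (z t) = 1.
Proof.
  intros [Hsol Hends] t Hat Htb. pose proof (proj1 Hsol) as Hab.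
  destruct (Req_dec (H xi (y t) (z t)) 1) as [|Hne]; [assumption|exfalso].
  set (d := Rabs (H xi (y t) (z t) - 1)).
  assert (Hd : 0 < d) by (apply Rabs_pos_lt; lra).
  assert (exists s : R, Rbar_lt a s /\ Rbar_lt s b /\
     Rabs (H xi (y s) (z s) - 1) < d) as [s [Has [Hsb Hs]]].
  { destruct Hends as [[_ HQ3] | [HQ3 _]].
    - apply Rbar_at_left'_ex_interval; [exact Hab|].
      exact (proj1 (filterlim_locally_Rabs _ _ _) (H_tends_1_at_Q3 _ xi xi_pos y z HQ3) d Hd).
    - apply Rbar_at_right'_ex_interval; [exact Hab|].
      exact (proj1 (filterlim_locally_Rabs _ _ _) (H_tends_1_at_Q3 _ xi xi_pos y z HQ3) d Hd). }
  rewrite (H_constant_on_sol a b y z Hsol s t) in Hs by assumption. unfold d in Hs. lra.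
Qed.

Lemma sol_z_attains (a b : Rbar) (y z : R -> R) (Z t1 t2 : R) : is_sol xi a b y z ->
  Rbar_lt a t1 -> Rbar_lt t1 b -> Rbar_lt a t2 -> Rbar_lt t2 b ->
  z t1 < Z -> Z < z t2 ->
  exists t : R, Rbar_lt a t /\ Rbar_lt t b /\ z t = Z.
Proof.
  intros [_ Hsol] Ha1 H1b Ha2 H2b Hz1 Hz2.
  assert (Hcont : forall s, Rmin t1 t2 <= s <= Rmax t1 t2 -> continuity_pt z s).
  { intros s Hs. destruct (Rbar_lt_between a b t1 t2 s Ha1 H1b Ha2 H2b Hs) as [Has Hsb].
    apply continuity_pt_filterlim, (ex_derive_continuous z).
    eexists. apply (Hsol s Has Hsb). }
  assert (exists t, Rmin t1 t2 <= t <= Rmax t1 t2 /\ z t = Z) as [t [Ht HzZ]].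
  { destruct (Rtotal_order t1 t2) as [Hlt|[->|Hgt]]; [|lra|].
    - rewrite Rmin_left, Rmax_right in Hcont |- * by lra.
      destruct (Ranalysis5.IVT_interv (fun s => z s - Z) t1 t2) as [t [Ht HzZ]];
        try lra; [|exists t; split; lra].
      intros s Hs. apply continuity_pt_minus; [now apply Hcont|].
      apply continuity_pt_const. now intros ? ?.
    - rewrite Rmin_right, Rmax_left in Hcont |- * by lra.
      destruct (Ranalysis5.IVT_interv (fun s => Z - z s) t2 t1) as [t [Ht HzZ]];
        try lra; [|exists t; split; lra].
      intros s Hs. apply continuity_pt_minus; [|now apply Hcont].
      apply continuity_pt_const. now intros ? ?. }
  exists t. destruct (Rbar_lt_between a b t1 t2 t Ha1 H1b Ha2 H2b Ht). tauto.
Qed.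

Lemma heteroclinic_z_surjective (a b : Rbar) (y z : R -> R) :
  heteroclinic_Q3_Q6 xi a b y z ->
  forall Z, exists t : R, Rbar_lt a t /\ Rbar_lt t b /\ z t = Z.
Proof.
  intros [Hsol Hends] Z. pose proof (proj1 Hsol) as Hab.
  destruct Hends as [[HQ6 HQ3] | [HQ3 HQ6]].
  - destruct (Rbar_at_right'_ex_interval a b _ Hab (tends_Q6_z_small _ y z HQ6 Z))
      as [t1 [Ha1 [H1b Hz1]]].
    destruct (Rbar_at_left'_ex_interval a b _ Hab
      (tends_Q3_z_large _ y z HQ3 Z))
      as [t2 [Ha2 [H2b Hz2]]].
    exact (sol_z_attains a b y z Z t1 t2 Hsol Ha1 H1b Ha2 H2b Hz1 Hz2).
  - destruct (Rbar_at_left'_ex_interval a b _ Hab (tends_Q6_z_small _ y z HQ6 Z))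
      as [t1 [Ha1 [H1b Hz1]]].
    destruct (Rbar_at_right'_ex_interval a b _ Hab
      (tends_Q3_z_large _ y z HQ3 Z))
      as [t2 [Ha2 [H2b Hz2]]].
    exact (sol_z_attains a b y z Z t1 t2 Hsol Ha1 H1b Ha2 H2b Hz1 Hz2).
Qed.

Lemma heteroclinic_orbit_iff (a b : Rbar) (y z : R -> R) :
  heteroclinic_Q3_Q6 xi a b y z ->
  forall Y Z : R, orbit a b y z Y Z <-> H xi Y Z = 1.
Proof.
  intros Hhet Y Z. split.
  - intros [t [Hat [Htb [<- <-]]]]. now apply (H_eq_1_on_heteroclinic a b).
  - rewrite (H_eq_1_iff xi xi_pos). intros ->.
    destruct (heteroclinic_z_surjective a b y z Hhet Z) as [t [Hat [Htb Hzt]]].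
    exists t. repeat split; try assumption.
    rewrite <- Hzt. apply (H_eq_1_iff xi xi_pos), (H_eq_1_on_heteroclinic a b); assumption.
Qed.

Lemma is_sol_of_level (a b : Rbar) (z : R -> R) : Rbar_lt a b ->
  (forall t : R, Rbar_lt a t -> Rbar_lt t b -> is_derive z t (exp (z t))) ->
  is_sol xi a b (fun t => level_y xi (z t)) z.
Proof.
  intros Hab Hz. split; [exact Hab|]. intros t Hat Htb.
  pose proof (Hz t Hat Htb) as Hzt.
  assert (Hfz : field_z xi (level_y xi (z t)) (z t) = exp (z t)).
  { unfold field_z, level_y. rewrite exp_Ropp. pose proof (exp_pos (z t)).
    field. split; lra. }
  rewrite Hfz. split; [|exact Hzt].
  assert (Hg : is_derive (level_y xi) (z t) (1 - exp (- z t)))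
    by (unfold level_y; auto_derive; [exact I | ring]).
  replace (field_y _ _) with (exp (z t) * (1 - exp (- z t))).
  - exact (is_derive_comp (level_y xi) z t _ _ Hg Hzt).
  - unfold field_y. rewrite exp_Ropp. field. apply Rgt_not_eq, exp_pos.
Qed.

End Dynamics.

(* On the level set the flow reduces to [z' = e^z], solved by [z = -ln(-t)] on [(-oo, 0)]. *)
Lemma heteroclinic_exists (xi : R) : 0 < xi ->
  exists (a b : Rbar) (y z : R -> R),
    is_sol xi a b y z /\
    tends_Q6 (Rbar_at_right' a) y z /\ tends_Q3 (Rbar_at_left' b) y z.
Proof.
  intros Hxi. set (z := fun t => - ln (- t)).
  exists m_infty, (Finite 0), (fun t => level_y xi (z t)), z. split; [|split].
  - apply (is_sol_of_level xi Hxi); [exact I|]. intros t _ Ht. simpl in Ht.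
    unfold z. auto_derive; [lra|]. rewrite exp_Ropp, exp_ln by lra. field. lra.
  - apply (tends_Q6_of_level _ xi Hxi); [|apply filter_forall; reflexivity].
    intros M. exists (- exp (- M)). intros t Ht. unfold z.
    pose proof (ln_increasing (exp (- M)) (- t) (exp_pos _) ltac:(lra)) as Hln.
    rewrite ln_exp in Hln. lra.
  - apply (tends_Q3_of_level _ xi Hxi); [|apply filter_forall; reflexivity].
    intros M. exists (mkposreal (exp (- M)) (exp_pos _)). intros t Ht Ht0.
    apply Rabs_lt_between' in Ht; simpl in Ht. unfold z.
    pose proof (ln_increasing (- t) (exp (- M)) ltac:(lra) ltac:(lra)) as Hln.
    rewrite ln_exp in Hln. lra.
Qed.

Definition z_minus (xi Y : R) : R := inv_nonneg (level_y xi) Y.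
Definition z_plus (xi Y : R) : R := - inv_nonneg (fun u => level_y xi (- u)) Y.

Section Branches.

Variable xi : R.
Hypothesis xi_pos : 0 < xi.

Lemma z_minus_spec (Y : R) : - / xi <= Y ->
  0 <= z_minus xi Y /\ level_y xi (z_minus xi Y) = Y.
Proof.
  rewrite <- (level_y_0 xi). apply (inv_nonneg_spec _ (1 + / xi)).
  - apply level_y_continuous.
  - intros u _. apply level_y_ge_sub.
Qed.

Lemma z_plus_spec (Y : R) : - / xi <= Y ->
  z_plus xi Y <= 0 /\ level_y xi (z_plus xi Y) = Y.
Proof.
  intros HY. rewrite <- (level_y_0 xi), <- Ropp_0 in HY.
  destruct (inv_nonneg_spec _ (1 + / xi) (level_y_opp_continuous xi)
    (level_y_opp_ge_sub xi) Y HY) as [Hu HfU].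
  unfold z_plus. split; [lra | exact HfU].
Qed.

Lemma level_set_as_graphs (Y Z : R) :
  H xi Y Z = 1 <-> - / xi <= Y /\ (Z = z_minus xi Y \/ Z = z_plus xi Y).
Proof.
  rewrite (H_eq_1_iff xi xi_pos). split.
  - intros ->. split; [apply level_y_ge|].
    destruct (Rle_or_lt 0 Z) as [HZ|HZ].
    + left. unfold z_minus. symmetry. apply (inv_nonneg_image _ (level_y_increasing xi) Z HZ).
    + right. unfold z_plus. rewrite <- (Ropp_involutive Z) at 2.
      rewrite (inv_nonneg_image _ (level_y_opp_increasing xi) (- Z)) by lra. ring.
  - intros [HY [-> | ->]]; symmetry; [apply z_minus_spec | apply z_plus_spec]; exact HY.
Qed.

Lemma z_minus_continuous (Y : R) : - / xi <= Y ->
  filterlim (z_minus xi) (within (fun u => - / xi <= u) (locally Y))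
    (locally (z_minus xi Y)).
Proof.
  rewrite <- (level_y_0 xi). intros HY.
  apply (inv_nonneg_continuous _ (1 + / xi) (level_y_continuous xi)
    (level_y_increasing xi) (fun u _ => level_y_ge_sub xi u) Y HY).
Qed.

Lemma z_plus_continuous (Y : R) : - / xi <= Y ->
  filterlim (z_plus xi) (within (fun u => - / xi <= u) (locally Y))
    (locally (z_plus xi Y)).
Proof.
  replace (- / xi) with (level_y xi (- 0)) by (rewrite Ropp_0; apply level_y_0).
  intros HY. unfold z_plus. eapply filterlim_comp.
  - apply (inv_nonneg_continuous _ (1 + / xi) (level_y_opp_continuous xi)
      (level_y_opp_increasing xi) (level_y_opp_ge_sub xi) Y HY).
  - exact (@filterlim_opp R_AbsRing R_NormedModule _).
Qed.

Lemma z_minus_bounds (Y : R) : - / xi <= Y -> Y <= z_minus xi Y <= Y + (1 + / xi).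
Proof.
  intros HY. destruct (z_minus_spec Y HY) as [Hz Hlev].
  unfold level_y in Hlev. pose proof (exp_pos (- z_minus xi Y)).
  assert (exp (- z_minus xi Y) <= 1).
  { rewrite <- exp_0. destruct Hz as [Hz|<-]; [left; apply exp_increasing; lra|].
    rewrite Ropp_0. lra. }
  pose proof (Rinv_0_lt_compat xi xi_pos). split; lra.
Qed.

Lemma z_plus_log_bounds (Y : R) : 2 * (1 + / xi) + 3 <= Y ->
  ln Y < - z_plus xi Y <= 2 * ln Y.
Proof.
  intros HY. pose proof (Rinv_0_lt_compat xi xi_pos).
  destruct (z_plus_spec Y ltac:(lra)) as [Hz Hlev].
  set (u := - z_plus xi Y) in *.
  assert (Hexp : exp u = Y + u + (1 + / xi))
    by (unfold level_y in Hlev; unfold u; lra).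
  assert (Hu : 0 <= u) by (unfold u; lra).
  pose proof (exp_ge_double u Hu).
  split.
  - rewrite <- (ln_exp u). apply ln_increasing; lra.
  - replace (2 * ln Y) with (ln (Y * Y)) by (rewrite ln_mult by lra; ring).
    rewrite <- (ln_exp u). apply ln_le; [apply exp_pos | nra].
Qed.

Lemma z_minus_tends_Q3 : tends_Q3 (Rbar_locally p_infty) (fun Y => Y) (z_minus xi).
Proof.
  apply (tends_Q3_of_level _ xi xi_pos).
  - intros M. exists (Rmax M (- / xi)). intros Y HY.
    pose proof (Rmax_l M (- / xi)). pose proof (Rmax_r M (- / xi)).
    pose proof (z_minus_bounds Y ltac:(lra)). lra.
  - exists (- / xi). intros Y HY. symmetry. apply z_minus_spec; lra.
Qed.

Lemma z_minus_big_O_id :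
  exists C, Rbar_locally p_infty (fun Y => Rabs (z_minus xi Y) <= C * Rabs Y).
Proof.
  pose proof (Rinv_0_lt_compat xi xi_pos).
  exists 2, (1 + / xi). intros Y HY. pose proof (z_minus_bounds Y ltac:(lra)).
  rewrite !Rabs_pos_eq by lra. lra.
Qed.

Lemma z_plus_tends_Q6 : tends_Q6 (Rbar_locally p_infty) (fun Y => Y) (z_plus xi).
Proof.
  apply (tends_Q6_of_level _ xi xi_pos).
  - intros M. exists (Rmax (exp (- M)) (2 * (1 + / xi) + 3)). intros Y HY.
    pose proof (Rmax_l (exp (- M)) (2 * (1 + / xi) + 3)).
    pose proof (Rmax_r (exp (- M)) (2 * (1 + / xi) + 3)).
    pose proof (z_plus_log_bounds Y ltac:(lra)).
    pose proof (ln_increasing (exp (- M)) Y (exp_pos _) ltac:(lra)).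
    rewrite ln_exp in *. lra.
  - exists (- / xi). intros Y HY. symmetry. apply z_plus_spec; lra.
Qed.

Lemma z_plus_big_O_ln :
  exists C, Rbar_locally p_infty (fun Y => Rabs (z_plus xi Y) <= C * Rabs (ln Y)).
Proof.
  pose proof (Rinv_0_lt_compat xi xi_pos).
  exists 2, (2 * (1 + / xi) + 3). intros Y HY.
  pose proof (z_plus_log_bounds Y ltac:(lra)).
  assert (0 < ln Y) by (rewrite <- ln_1; apply ln_increasing; lra).
  rewrite Rabs_left1, Rabs_pos_eq by lra. lra.
Qed.

End Branches.

Theorem lemma3 (xi : R) (hxi : 0 < xi) :
  (* existence of a heteroclinic connection (from Q^6 to Q^3) *)
  (exists (a b : Rbar) (y z : R -> R),
      is_sol xi a b y z /\
      tends_Q6 (Rbar_at_right' a) y z /\ tends_Q3 (Rbar_at_left' b) y z) /\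
  (* uniqueness: every heteroclinic connection between Q^3 and Q^6 has as orbit
     exactly the level set {H = 1} *)
  (forall (a b : Rbar) (y z : R -> R),
      heteroclinic_Q3_Q6 xi a b y z ->
      forall Y Z : R, orbit a b y z Y Z <-> H xi Y Z = 1) /\
  (* the level set {H = 1} is the union of two graphs z = z^-(y), z = z^+(y),
     y >= -1/xi *)
  (exists zm zp : R -> R,
      (forall Y Z : R,
          H xi Y Z = 1 <-> (- / xi <= Y /\ (Z = zm Y \/ Z = zp Y))) /\
      (forall Y : R, - / xi <= Y -> filterlim zm (within (fun u => - / xi <= u) (locally Y)) (locally (zm Y)) /\
          filterlim zp (within (fun u => - / xi <= u) (locally Y)) (locally (zp Y))) /\
      (* z^- approaches Q^3 as y -> oo, with z^- = O(y) *)
      tends_Q3 (Rbar_locally p_infty) (fun Y => Y) zm /\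
      (exists C : R, Rbar_locally p_infty (fun Y => Rabs (zm Y) <= C * Rabs Y)) /\
      (* z^+ approaches Q^6 as y -> oo, with z^+ = O(ln y) *)
      tends_Q6 (Rbar_locally p_infty) (fun Y => Y) zp /\
      (exists C : R, Rbar_locally p_infty (fun Y => Rabs (zp Y) <= C * Rabs (ln Y)))).
Proof.
  split; [now apply heteroclinic_exists|].
  split; [intros a b y z Hhet; now apply (heteroclinic_orbit_iff xi hxi a b)|].
  exists (z_minus xi), (z_plus xi).
  split; [exact (level_set_as_graphs xi hxi)|].
  split; [intros Y HY; split; [apply z_minus_continuous | apply z_plus_continuous]; exact HY|].
  split; [exact (z_minus_tends_Q3 xi hxi)|].
  split; [exact (z_minus_big_O_id xi hxi)|].
  split; [exact (z_plus_tends_Q6 xi hxi) | exact (z_plus_big_O_ln xi hxi)].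
Qed.
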